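(* Let $0<\alpha<1$, $T>0$, $M\in\mathbb{N}^+$, $\Delta t=T/M$, $t_n=n\Delta t$, and let $u\in C^{k+1}[0,T]$, where $1\le i\le k\le 6$ are integers. Let $D^{\alpha}_{k,i}u(t_n)$ be the approximation of the Caputo derivative defined in the context. Then there is a constant $C$ (depending on $u$, $\alpha$, $k$, $i$, but not on $n$ or $\Delta t$) such that for all $k\le n\le M$: (i) if $1\le i<k\le 6$, $$\big|D_{k,i}^{\alpha}u(t_{n})-{}^{C}D^{\alpha}u(t_{n})\big|\le C\big(t_{n-k+i}^{-\alpha-1}\,\Delta t^{k+1}+\Delta t^{k+1-\alpha}\big);$$ (ii) if $i=k\in\{1,\dots,6\}$, $$\big|D_{k,k}^{\alpha}u(t_{n})-{}^{C}D^{\alpha}u(t_{n})\big|\le C\,\Delta t^{k+1-\alpha}.$$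
   Context: Caputo derivative of order $\alpha\in(0,1)$: ${}^{C}D^{\alpha}u(t)=\frac{1}{\Gamma(1-\alpha)}\int_0^t (t-\xi)^{-\alpha}u'(\xi)\,\mathrm{d}\xi$. Let $I_j=[t_{j-1},t_j]$. For integers $m\ge1$, $j$, $q$, let $p^{m}_{j,q}$ denote the polynomial of degree at most $m$ interpolating $u$ at the $m+1$ nodes $t_{j+q-m-1},t_{j+q-m},\dots,t_{j+q-1}$ (considered on $I_j$). For $1\le i\le k\le 6$ and $n\ge k$, let $P^{k}_{i,n}$ be the continuous piecewise polynomial on $[0,t_n]$ given on $I_j$ by: $P^{k}_{i,n}=p^{k-1}_{j,k-j}$ for $1\le j\le k-i$; $P^{k}_{i,n}=p^{k}_{j,i}$ for $k-i+1\le j\le n-i+1$; $P^{k}_{i,n}=p^{k}_{j,n+1-j}$ for $n-i+2\le j\le n$. Then $D^{\alpha}_{k,i}u(t_n)=\frac{1}{\Gamma(1-\alpha)}\int_0^{t_n}(t_n-\xi)^{-\alpha}\frac{\mathrm{d}}{\mathrm{d}\xi}P^{k}_{i,n}(\xi)\,\mathrm{d}\xi$. *)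

From Stdlib Require Import Reals.
From Coquelicot Require Import Coquelicot.
Open Scope R_scope.

Definition Gamma (s : R) : R :=
  RInt_gen (fun x => Rpower x (s - 1) * exp (- x))
    (at_right 0) (Rbar_locally p_infty).

Definition caputo (alpha : R) (u : R -> R) (t : R) : R :=
  / Gamma (1 - alpha) *
  RInt_gen (fun xi => Rpower (t - xi) (- alpha) * Derive u xi)
    (at_point 0) (at_left t).

Definition node (dt : R) (l : nat) : R := INR l * dt.

Fixpoint sumR (n : nat) (f : nat -> R) : R :=
  match n with O => 0 | S n' => sumR n' f + f n' end.
Fixpoint prodR (n : nat) (f : nat -> R) : R :=
  match n with O => 1 | S n' => prodR n' f * f n' end.

Definition interp (u : R -> R) (dt : R) (m s : nat) (x : R) : R :=
  sumR (S m) (fun l =>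
    u (node dt (s + l)) *
    prodR (S m) (fun r =>
      if Nat.eqb r l then 1
      else (x - node dt (s + r)) / (node dt (s + l) - node dt (s + r)))).

(* p^m_{j,q}: interpolant of u at t_(j+q-m-1), ..., t_(j+q-1).
   (In every use below j+q-m-1 >= 0, so nat subtraction is exact.) *)
Definition pmjq (u : R -> R) (dt : R) (m j q : nat) (x : R) : R :=
  interp u dt m (j + q - m - 1) x.

Definition piece (u : R -> R) (dt : R) (k i n j : nat) (x : R) : R :=
  if Nat.leb j (k - i) then pmjq u dt (k - 1) j (k - j) x
  else if Nat.leb j (n - i + 1) then pmjq u dt k j i x
  else pmjq u dt k j (n + 1 - j) x.

Definition in_seg (dt : R) (j : nat) (x : R) : bool :=
  if Rle_dec x (node dt j) then
    (if Nat.eqb j 1 then (if Rle_dec (node dt 0) x then true else false)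
     else (if Rlt_dec (node dt (j - 1)) x then true else false))
  else false.

Definition Pkin (u : R -> R) (dt : R) (k i n : nat) (x : R) : R :=
  sumR n (fun j0 => let j := S j0 in
    if in_seg dt j x then piece u dt k i n j x else 0).

Definition Dki (alpha : R) (k i : nat) (u : R -> R) (dt : R) (n : nat) : R :=
  / Gamma (1 - alpha) *
  RInt_gen
    (fun xi => Rpower (node dt n - xi) (- alpha) * Derive (Pkin u dt k i n) xi)
    (at_point 0) (at_left (node dt n)).

From Pilot Require Import Defs.
From Stdlib Require Import Reals Lra Lia Factorial.
From Coquelicot Require Import Coquelicot.
Open Scope R_scope.

(* On a cell I_j where P^k_{i,n} is an interpolant p of u, p - u vanishes at
   both ends of the cell, so integrating by parts against the kernel
   (t_n - x)^(-alpha) turns the cell's contribution into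
   alpha * int (t_n - x)^(-alpha-1) (p - u).  The first k - i cells use
   degree k - 1, so |p - u| = O(dt^k), and there the kernel is at most
   t_(n-k+i)^(-alpha-1): this gives the term t_(n-k+i)^(-alpha-1) dt^(k+1).
   On the remaining interior cells |p - u| = O(dt^(k+1)) and the kernel
   integrates (telescopically) to O(dt^(-alpha)).  On the last cell only the
   left end is a node, but |p - u| <= C dt^k (t_n - x) there, which absorbs
   the singularity of the kernel and gives O(dt^(k+1-alpha)).  The same
   bound (t_n - x)^(-alpha) on the integrands makes both improper integrals
   converge. *)

Lemma sumR_ext N f g : (forall l, (l < N)%nat -> f l = g l) -> sumR N f = sumR N g.
Proof.
  induction N as [|N IH]; intros H; simpl; auto.
  rewrite IH by (intros; apply H; lia). now rewrite H by lia.
Qed.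

Lemma prodR_ext N f g : (forall l, (l < N)%nat -> f l = g l) -> prodR N f = prodR N g.
Proof.
  induction N as [|N IH]; intros H; simpl; auto.
  rewrite IH by (intros; apply H; lia). now rewrite H by lia.
Qed.

Lemma sumR_plus N f g : sumR N (fun l => f l + g l) = sumR N f + sumR N g.
Proof. induction N as [|N IH]; simpl; [ring | rewrite IH; ring]. Qed.

Lemma sumR_scal N c f : sumR N (fun l => c * f l) = c * sumR N f.
Proof. induction N as [|N IH]; simpl; [ring | rewrite IH; ring]. Qed.

Lemma sumR_mult_r N f c : sumR N f * c = sumR N (fun l => f l * c).
Proof. induction N as [|N IH]; simpl; [ring | rewrite <- IH; ring]. Qed.

Lemma sumR_zero N : sumR N (fun _ => 0) = 0.
Proof. induction N as [|N IH]; simpl; [|rewrite IH]; ring. Qed.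

Lemma sumR_swap N P a :
  sumR N (fun l => sumR P (fun p => a l p)) = sumR P (fun p => sumR N (fun l => a l p)).
Proof.
  induction N as [|N IH]; simpl.
  - now rewrite sumR_zero.
  - now rewrite IH, <- sumR_plus.
Qed.

Lemma sumR_abs_le N f B :
  (forall l, (l < N)%nat -> Rabs (f l) <= B) -> Rabs (sumR N f) <= INR N * B.
Proof.
  induction N as [|N IH]; intros H; simpl sumR.
  - rewrite Rabs_R0; simpl; lra.
  - rewrite S_INR; eapply Rle_trans; [apply Rabs_triang|].
    assert (Rabs (sumR N f) <= INR N * B) by (apply IH; intros; apply H; lia).
    assert (Rabs (f N) <= B) by (apply H; lia).
    lra.
Qed.

Lemma sumR_single N f l0 :
  (l0 < N)%nat -> (forall l, (l < N)%nat -> l <> l0 -> f l = 0) -> sumR N f = f l0.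
Proof.
  induction N as [|N IH]; intros Hl0 H; simpl; [lia|].
  destruct (Nat.eq_dec l0 N) as [->|Hne].
  - rewrite (sumR_ext N f (fun _ => 0)), sumR_zero by (intros; apply H; lia). ring.
  - rewrite IH, (H N) by (intros; try apply H; lia). ring.
Qed.

Lemma prodR_abs_le N f B :
  0 <= B -> (forall r, (r < N)%nat -> Rabs (f r) <= B) -> Rabs (prodR N f) <= B ^ N.
Proof.
  induction N as [|N IH]; intros HB H; simpl.
  - rewrite Rabs_R1; lra.
  - rewrite Rabs_mult, Rmult_comm.
    apply Rmult_le_compat; try apply Rabs_pos; [apply H; lia | apply IH; auto].
Qed.

Lemma prodR_abs_le_factor N f B r0 :
  0 <= B -> (r0 < N)%nat -> (forall r, (r < N)%nat -> Rabs (f r) <= B) ->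
  Rabs (prodR N f) <= Rabs (f r0) * B ^ (N - 1).
Proof.
  induction N as [|N IH]; intros HB Hr0 H; simpl; [lia|].
  rewrite Rabs_mult; destruct (Nat.eq_dec r0 N) as [->|Hne].
  - replace (N - 0)%nat with N by lia; rewrite Rmult_comm.
    apply Rmult_le_compat_l; [apply Rabs_pos | apply prodR_abs_le; auto].
  - replace (N - 0)%nat with (S (N - 1)) by lia; simpl.
    rewrite (Rmult_comm B), <- Rmult_assoc.
    apply Rmult_le_compat; try apply Rabs_pos; [apply IH; auto; lia | apply H; lia].
Qed.

Lemma prodR_zero N f r0 : (r0 < N)%nat -> f r0 = 0 -> prodR N f = 0.
Proof.
  induction N as [|N IH]; intros Hr0 H; simpl; [lia|].
  destruct (Nat.eq_dec r0 N) as [->|Hne]; [rewrite H | rewrite IH by (auto; lia)]; ring.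
Qed.

Lemma prodR_one N f : (forall r, (r < N)%nat -> f r = 1) -> prodR N f = 1.
Proof. induction N as [|N IH]; intros H; simpl; auto. rewrite IH, H by (auto; lia). ring. Qed.

(* Coquelicot states these for the generic [plus]/[mult], which [apply] does not
   unify with [Rplus]/[Rmult]. *)
Lemma continuous_Rplus (f g : R -> R) x :
  continuous f x -> continuous g x -> continuous (fun y => f y + g y) x.
Proof. exact (continuous_plus (U := R_UniformSpace) (V := R_NormedModule) f g x). Qed.

Lemma continuous_Rmult (f g : R -> R) x :
  continuous f x -> continuous g x -> continuous (fun y => f y * g y) x.
Proof. exact (continuous_mult (U := R_UniformSpace) (K := R_AbsRing) f g x). Qed.

Lemma is_derive_continuous (f : R -> R) x l : is_derive f x l -> continuous f x.
Proof. intros H; apply (ex_derive_continuous (V := R_NormedModule)); exists l; exact H. Qed.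

Definition taylor (f : R -> R) (n : nat) (y x : R) : R :=
  sumR (S n) (fun p => Derive_n f p y * (x - y) ^ p / INR (fact p)).

Lemma taylor_center f n x : taylor f n x x = f x.
Proof.
  unfold taylor; induction n as [|n IH].
  - simpl; field.
  - change (sumR (S (S n)) ?g) with (sumR (S n) g + g (S n)).
    rewrite IH, Rminus_diag, pow_i by lia. field. apply INR_fact_neq_0.
Qed.

Lemma is_derive_taylor_center (f : R -> R) (n : nat) (x t : R) :
  (forall p, (p <= S n)%nat -> ex_derive_n f p t) ->
  is_derive (fun y => taylor f n y x) t (Derive_n f (S n) t * (x - t) ^ n / INR (fact n)).
Proof.
  unfold taylor; induction n as [|n IH]; intros Hf.
  - apply (is_derive_ext f); [intros y; simpl; field|].
    assert (Hf1 := Hf 1%nat (le_n _)); auto_derive; auto; simpl; field.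
  - assert (Hd := IH (fun p Hp => Hf p ltac:(lia))).
    assert (Hf2 : ex_derive (Derive_n f (S n)) t) by exact (Hf (S (S n)) (le_n _)).
    change (sumR (S (S n)) ?g) with (sumR (S n) g + g (S n)).
    set (d := Derive_n f (S (S n)) t * (x - t) ^ S n / INR (fact (S n))).
    assert (Hl : is_derive (fun y => Derive_n f (S n) y * (x - y) ^ S n / INR (fact (S n))) t
                   (d - Derive_n f (S n) t * (x - t) ^ n / INR (fact n))).
    { unfold d; auto_derive; [auto|].
      change (Derive (fun y => Derive (Derive_n f n) y) t) with (Derive_n f (S (S n)) t).
      change (Derive (Derive_n f n) t) with (Derive_n f (S n) t).
      change (match n with 0%nat => 1 | S _ => INR n + 1 end) with (INR (S n)).
      change (INR (fact n + n * fact n)) with (INR (fact (S n))).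
      rewrite fact_simpl, mult_INR, S_INR; unfold Rminus, Rdiv; simpl pow; field.
      split; [apply INR_fact_neq_0|pose proof (pos_INR n); lra]. }
    replace d with (Derive_n f (S n) t * (x - t) ^ n / INR (fact n)
                    + (d - Derive_n f (S n) t * (x - t) ^ n / INR (fact n))) by ring.
    exact (is_derive_plus _ _ _ _ _ Hd Hl).
Qed.

Lemma taylor_remainder_bound (f : R -> R) (n : nat) (x y K : R) :
  (forall t, Rmin x y <= t <= Rmax x y -> forall p, (p <= S n)%nat -> ex_derive_n f p t) ->
  (forall t, Rmin x y <= t <= Rmax x y -> Rabs (Derive_n f (S n) t) <= K) ->
  Rabs (f x - taylor f n y x) <= K * Rabs (x - y) ^ S n.
Proof.
  intros Hf HK.
  assert (Hd : forall t, Rmin y x <= t <= Rmax y x ->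
    is_derive (fun z => taylor f n z x) t (Derive_n f (S n) t * (x - t) ^ n / INR (fact n))).
  { intros t Ht; apply is_derive_taylor_center, Hf; rewrite Rmin_comm, Rmax_comm; auto. }
  destruct (MVT_gen (fun z => taylor f n z x) y x
              (fun t => Derive_n f (S n) t * (x - t) ^ n / INR (fact n))) as [c [Hc Hmvt]].
  - intros z Hz; apply Hd; lra.
  - intros z Hz; apply continuity_pt_filterlim.
    eapply (is_derive_continuous (fun z0 => taylor f n z0 x)), Hd; auto.
  - rewrite taylor_center in Hmvt; rewrite Hmvt; rewrite Rmin_comm, Rmax_comm in Hc.
    assert (Hxc : Rabs (x - c) <= Rabs (x - y)).
    { unfold Rmin, Rmax in Hc; destruct (Rle_dec x y); unfold Rabs; repeat destruct Rcase_abs; lra. }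
    assert (Hfact : 1 <= INR (fact n)) by apply (le_INR 1), lt_O_fact.
    assert (Hpow : Rabs (x - c) ^ n <= Rabs (x - y) ^ n) by (apply pow_incr; split; [apply Rabs_pos | auto]).
    unfold Rdiv; rewrite !Rabs_mult, Rabs_inv, (Rabs_right (INR _)) by lra.
    rewrite <- !RPow_abs; simpl pow.
    assert (0 <= / INR (fact n) <= 1).
    { split; [apply Rlt_le, Rinv_0_lt_compat; lra | rewrite <- Rinv_1; apply Rinv_le_contravar; lra]. }
    assert (HKc := HK c Hc).
    assert (0 <= Rabs (x - c) ^ n) by (apply pow_le, Rabs_pos).
    assert (0 <= Rabs (Derive_n f (S n) c) * Rabs (x - c) ^ n) by (apply Rmult_le_pos; auto; apply Rabs_pos).
    pose proof (Rabs_pos (x - y)).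
    apply Rle_trans with (Rabs (Derive_n f (S n) c) * Rabs (x - c) ^ n * Rabs (x - y)).
    + apply Rmult_le_compat_r; auto. nra.
    + replace (K * (Rabs (x - y) * Rabs (x - y) ^ n)) with (K * Rabs (x - y) ^ n * Rabs (x - y)) by ring.
      apply Rmult_le_compat_r; auto. apply Rmult_le_compat; auto; apply Rabs_pos.
Qed.

Lemma taylor_remainder_bound_left (f : R -> R) (n : nat) (a b y K : R) : a <= y <= b ->
  (forall t, a <= t <= b -> forall p, (p <= S n)%nat -> ex_derive_n f p t) ->
  (forall t, a <= t <= b -> Rabs (Derive_n f (S n) t) <= K) ->
  Rabs (f y - taylor f n b y) <= K * (b - y) ^ S n.
Proof.
  intros Hy Hf HK.
  assert (Hsub : forall t, Rmin y b <= t <= Rmax y b -> a <= t <= b)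
    by (intros t Ht; unfold Rmin, Rmax in Ht; destruct (Rle_dec y b); lra).
  rewrite <- (Rabs_right (b - y)), (Rabs_minus_sym b y) by lra.
  apply taylor_remainder_bound; intros t Ht; [apply Hf | apply HK]; auto.
Qed.

Lemma node_add dt a b : node dt (a + b) = node dt a + INR b * dt.
Proof. unfold node; rewrite plus_INR; ring. Qed.

Lemma node_le dt a b : 0 <= dt -> (a <= b)%nat -> node dt a <= node dt b.
Proof. intros; unfold node; apply Rmult_le_compat_r, le_INR; auto. Qed.

Lemma node_lt dt a b : 0 < dt -> (a < b)%nat -> node dt a < node dt b.
Proof. intros; unfold node; apply Rmult_lt_compat_r, lt_INR; auto. Qed.

Lemma node_nonneg dt a : 0 <= dt -> 0 <= node dt a.
Proof. intros; unfold node; apply Rmult_le_pos; auto using pos_INR. Qed.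

Lemma node_pos dt a : 0 < dt -> (0 < a)%nat -> 0 < node dt a.
Proof. intros; unfold node; apply Rmult_lt_0_compat; [apply lt_0_INR|]; auto. Qed.

Lemma node_sub dt a b : (b <= a)%nat -> node dt a - node dt b = node dt (a - b).
Proof. intros; unfold node; rewrite minus_INR by auto; ring. Qed.

Lemma node_pred dt j : (1 <= j)%nat -> node dt j - node dt (j - 1) = dt.
Proof. intros; rewrite node_sub by lia; replace (j - (j - 1))%nat with 1%nat by lia; unfold node; simpl; ring. Qed.

Lemma node_uniform_le T M n : 0 < T -> (1 <= M)%nat -> (n <= M)%nat -> node (T / INR M) n <= T.
Proof.
  intros HT HM Hn; unfold node.
  assert (HMpos : 0 < INR M) by (apply lt_0_INR; lia).
  assert (INR n <= INR M) by (apply le_INR; lia).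
  replace (INR n * (T / INR M)) with (T * (INR n / INR M)) by (field; lra).
  rewrite <- (Rmult_1_r T) at 2; apply Rmult_le_compat_l; [lra|].
  apply (Rmult_le_reg_r (INR M)); auto; unfold Rdiv; rewrite Rmult_assoc, Rinv_l; lra.
Qed.

Lemma in_seg_interior dt j j' y : 0 < dt -> (1 <= j)%nat -> (1 <= j')%nat ->
  node dt (j - 1) < y < node dt j -> in_seg dt j' y = Nat.eqb j' j.
Proof.
  intros Hdt Hj Hj' Hy; unfold in_seg.
  destruct (Nat.eqb j' j) eqn:E; [apply Nat.eqb_eq in E; subst j'|apply Nat.eqb_neq in E].
  - destruct (Rle_dec y (node dt j)); [|lra].
    destruct (Nat.eqb j 1) eqn:E1.
    + apply Nat.eqb_eq in E1; subst; destruct (Rle_dec (node dt 0) y); auto.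
      unfold node in *; simpl in *; lra.
    + destruct (Rlt_dec (node dt (j - 1)) y); auto; lra.
  - destruct (Rle_dec y (node dt j')); auto.
    destruct (Nat.lt_gt_cases j' j) as [[Hlt|Hgt] _]; auto.
    + assert (node dt j' <= node dt (j - 1)) by (apply node_le; lia || lra); lra.
    + destruct (Nat.eqb j' 1) eqn:E1; [apply Nat.eqb_eq in E1; lia|].
      destruct (Rlt_dec (node dt (j' - 1)) y); auto.
      assert (node dt j <= node dt (j' - 1)) by (apply node_le; lia || lra); lra.
Qed.

Lemma Pkin_on_cell u dt k i n j y : 0 < dt -> (1 <= j <= n)%nat ->
  node dt (j - 1) < y < node dt j -> Pkin u dt k i n y = piece u dt k i n j y.
Proof.
  intros Hdt Hj Hy; unfold Pkin.
  rewrite (sumR_single _ _ (j - 1)); [| lia |].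
  - replace (S (j - 1)) with j by lia; rewrite (in_seg_interior dt j) , Nat.eqb_refl by (auto; lia).
    auto.
  - intros l Hl Hne; rewrite (in_seg_interior dt j) by (auto; lia).
    replace (Nat.eqb (S l) j) with false by (symmetry; apply Nat.eqb_neq; lia); auto.
Qed.

Lemma Derive_Pkin_on_cell u dt k i n j x : 0 < dt -> (1 <= j <= n)%nat ->
  node dt (j - 1) < x < node dt j -> Derive (Pkin u dt k i n) x = Derive (piece u dt k i n j) x.
Proof.
  intros Hdt Hj Hx; apply Derive_ext_loc.
  assert (He : 0 < Rmin (x - node dt (j - 1)) (node dt j - x)) by (apply Rmin_pos; lra).
  exists (mkposreal _ He); intros y Hy; change (Rabs (y - x) < Rmin (x - node dt (j - 1)) (node dt j - x)) in Hy.
  apply Rabs_lt_between in Hy.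
  pose proof (Rmin_l (x - node dt (j - 1)) (node dt j - x));
    pose proof (Rmin_r (x - node dt (j - 1)) (node dt j - x)).
  apply Pkin_on_cell; auto; lra.
Qed.

Lemma piece_initial u dt k i n j : (j <= k - i)%nat ->
  piece u dt k i n j = Defs.interp u dt (k - 1) 0.
Proof.
  intros Hj; unfold piece, pmjq; rewrite (proj2 (Nat.leb_le _ _) Hj).
  replace (j + (k - j) - (k - 1) - 1)%nat with 0%nat by lia; reflexivity.
Qed.

Lemma piece_interior u dt k i n j : (1 <= i <= k)%nat -> (k <= n)%nat -> (k - i < j <= n)%nat ->
  exists s, piece u dt k i n j = Defs.interp u dt k s /\ (s + 1 <= j <= s + k)%nat /\ (s + k <= n)%nat.
Proof.
  intros Hi Hk Hj; unfold piece, pmjq.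
  replace (Nat.leb j (k - i)) with false by (symmetry; apply Nat.leb_gt; lia).
  destruct (Nat.leb j (n - i + 1)) eqn:E; [apply Nat.leb_le in E | apply Nat.leb_gt in E].
  - exists (j + i - k - 1)%nat; split; [reflexivity | lia].
  - exists (n - k)%nat; split; [| lia].
    replace (j + (n + 1 - j) - k - 1)%nat with (n - k)%nat by lia; reflexivity.
Qed.

Lemma piece_last u dt k i n : (1 <= i <= k)%nat -> (k <= n)%nat ->
  piece u dt k i n n = Defs.interp u dt k (n - k).
Proof.
  intros Hi Hk; unfold piece, pmjq.
  replace (Nat.leb n (k - i)) with false by (symmetry; apply Nat.leb_gt; lia).
  destruct (Nat.leb n (n - i + 1)) eqn:E; [apply Nat.leb_le in E | apply Nat.leb_gt in E].
  - replace (n + i - k - 1)%nat with (n - k)%nat by lia; reflexivity.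
  - replace (n + (n + 1 - n) - k - 1)%nat with (n - k)%nat by lia; reflexivity.
Qed.

(** * Lagrange interpolation on the grid *)

(* The Lagrange basis for the nodes 0, ..., m, used in the rescaled variable
   (x - t_s) / dt. *)
Definition lagrange_basis (m l : nat) (th : R) : R :=
  prodR (S m) (fun r => if Nat.eqb r l then 1 else (th - INR r) / (INR l - INR r)).

Lemma Rabs_INR_sub_ge1 l r : l <> r -> 1 <= Rabs (INR l - INR r).
Proof.
  intros H; destruct (Nat.lt_gt_cases l r) as [[Hlt|Hlt] _]; auto.
  - assert (INR (S l) <= INR r) by (apply le_INR; lia).
    rewrite S_INR in *; rewrite Rabs_left1; lra.
  - assert (INR (S r) <= INR l) by (apply le_INR; lia).
    rewrite S_INR in *; rewrite Rabs_right; lra.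
Qed.

Lemma INR_sub_neq0 l r : l <> r -> INR l - INR r <> 0.
Proof. intros H E; pose proof (Rabs_INR_sub_ge1 l r H); rewrite E, Rabs_R0 in *; lra. Qed.

Lemma interp_lagrange_basis u dt m s x : dt <> 0 ->
  Defs.interp u dt m s x =
  sumR (S m) (fun l => u (node dt (s + l)) * lagrange_basis m l ((x - node dt s) / dt)).
Proof.
  intros Hdt; apply sumR_ext; intros l Hl; f_equal; apply prodR_ext; intros r Hr.
  destruct (Nat.eqb r l) eqn:E; auto; apply Nat.eqb_neq in E.
  assert (Hlr : INR l - INR r <> 0) by (apply INR_sub_neq0; auto).
  unfold node; rewrite !plus_INR; field; repeat split; auto.
  intros C; apply Hlr, (Rmult_eq_reg_r dt); auto; lra.
Qed.

(* Exactness of Lagrange interpolation on polynomials of degree <= m, checked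
   for each of the finitely many (m, p) by a field computation; this is where
   the restriction k <= 6 enters. *)
Lemma lagrange_basis_reproduces_powers m p th : (1 <= m <= 6)%nat -> (p <= m)%nat ->
  sumR (S m) (fun l => (INR l - INR m) ^ p * lagrange_basis m l th) = (th - INR m) ^ p.
Proof.
  intros Hm Hp.
  destruct m as [|[|[|[|[|[|[|m]]]]]]]; try lia;
  destruct p as [|[|[|[|[|[|[|p]]]]]]]; try lia; unfold lagrange_basis; simpl; field.
Qed.

Lemma lagrange_basis_node m l l' : (l <= m)%nat -> (l' <= m)%nat ->
  lagrange_basis m l (INR l') = if Nat.eqb l l' then 1 else 0.
Proof.
  intros Hl Hl'; unfold lagrange_basis; destruct (Nat.eqb l l') eqn:E.
  - apply Nat.eqb_eq in E; subst; apply prodR_one; intros r Hr.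
    destruct (Nat.eqb r l') eqn:E; auto; apply Nat.eqb_neq in E.
    field; apply INR_sub_neq0; auto.
  - apply Nat.eqb_neq in E; apply (prodR_zero _ _ l'); [lia|].
    destruct (Nat.eqb l' l) eqn:E2; [apply Nat.eqb_eq in E2; lia | unfold Rdiv; ring].
Qed.

Lemma interp_node u dt m s l : dt <> 0 -> (l <= m)%nat ->
  Defs.interp u dt m s (node dt (s + l)) = u (node dt (s + l)).
Proof.
  intros Hdt Hl; rewrite interp_lagrange_basis by auto.
  replace ((node dt (s + l) - node dt s) / dt) with (INR l) by (rewrite node_add; field; auto).
  rewrite (sumR_single _ _ l); [| lia |].
  - rewrite lagrange_basis_node, Nat.eqb_refl by lia; ring.
  - intros l' Hl' Hne; rewrite lagrange_basis_node by lia.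
    destruct (Nat.eqb l' l) eqn:E; [apply Nat.eqb_eq in E; lia | ring].
Qed.

Lemma interp_taylor u dt m s x : (1 <= m <= 6)%nat -> dt <> 0 ->
  sumR (S m) (fun l => taylor u m (node dt (s + m)) (node dt (s + l))
                       * lagrange_basis m l ((x - node dt s) / dt))
  = taylor u m (node dt (s + m)) x.
Proof.
  intros Hm Hdt; unfold taylor.
  set (th := (x - node dt s) / dt).
  assert (Hfact : forall p, INR (fact p) <> 0) by (intros; apply INR_fact_neq_0).
  rewrite (sumR_ext _ _ (fun l => sumR (S m) (fun p =>
      Derive_n u p (node dt (s + m)) * (node dt (s + l) - node dt (s + m)) ^ p / INR (fact p)
      * lagrange_basis m l th))) by (intros; apply sumR_mult_r).
  rewrite sumR_swap; apply sumR_ext; intros p Hp.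
  rewrite (sumR_ext _ _ (fun l => (Derive_n u p (node dt (s + m)) * dt ^ p / INR (fact p)) *
     ((INR l - INR m) ^ p * lagrange_basis m l th))).
  - rewrite sumR_scal, lagrange_basis_reproduces_powers by lia.
    replace (x - node dt (s + m)) with ((th - INR m) * dt) by (unfold th; rewrite node_add; field; auto).
    rewrite Rpow_mult_distr; field; auto.
  - intros l Hl; rewrite !node_add.
    replace (node dt s + INR l * dt - (node dt s + INR m * dt)) with ((INR l - INR m) * dt) by ring.
    rewrite Rpow_mult_distr; field; auto.
Qed.

Lemma lagrange_basis_abs_le m l th : (l < m)%nat -> 0 <= th <= INR m ->
  Rabs (lagrange_basis m l th) <= (INR m - th) * INR m ^ m.
Proof.
  intros Hl Hth; unfold lagrange_basis.
  assert (Hfac : forall r, r <> l -> Rabs (/ (INR l - INR r)) <= 1).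
  { intros r Hr; rewrite Rabs_inv, <- Rinv_1.
    pose proof (Rabs_INR_sub_ge1 l r (fun e => Hr (eq_sym e))).
    apply Rinv_le_contravar; lra. }
  eapply Rle_trans; [apply (prodR_abs_le_factor _ _ (INR m) m); try lra; try lia|].
  - intros r Hr; destruct (Nat.eqb r l) eqn:E.
    + rewrite Rabs_R1; apply (le_INR 1); lia.
    + apply Nat.eqb_neq in E; unfold Rdiv; rewrite Rabs_mult.
      assert (Rabs (th - INR r) <= INR m).
      { assert (INR r <= INR m) by (apply le_INR; lia); pose proof (pos_INR r).
        unfold Rabs; destruct Rcase_abs; lra. }
      pose proof (Hfac r E); pose proof (Rabs_pos (th - INR r)); pose proof (Rabs_pos (/ (INR l - INR r))).
      nra.
  - replace (S m - 1)%nat with m by lia.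
    apply Rmult_le_compat_r; [apply pow_le, pos_INR|].
    replace (Nat.eqb m l) with false by (symmetry; apply Nat.eqb_neq; lia).
    unfold Rdiv; rewrite Rabs_mult, Rabs_minus_sym, (Rabs_right (INR m - th)) by lra.
    pose proof (Hfac m ltac:(lia)); pose proof (Rabs_pos (/ (INR l - INR m))); nra.
Qed.

Lemma interp_sub_taylor_remainder u dt m s x : (1 <= m <= 6)%nat -> dt <> 0 ->
  let rem := fun y => u y - taylor u m (node dt (s + m)) y in
  Defs.interp u dt m s x - u x =
  sumR (S m) (fun l => rem (node dt (s + l)) * lagrange_basis m l ((x - node dt s) / dt)) - rem x.
Proof.
  intros Hm Hdt rem; unfold rem; rewrite interp_lagrange_basis by auto.
  rewrite (sumR_ext _ _ (fun l =>
      (u (node dt (s + l)) - taylor u m (node dt (s + m)) (node dt (s + l)))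
        * lagrange_basis m l ((x - node dt s) / dt)
      + taylor u m (node dt (s + m)) (node dt (s + l)) * lagrange_basis m l ((x - node dt s) / dt)))
    by (intros; ring).
  rewrite sumR_plus, interp_taylor by auto; ring.
Qed.

(* (m+1) basis terms, each at most K m^(2m+1) dt^m (t_(s+m) - x), plus the
   Taylor remainder at x, at most K m^m dt^m (t_(s+m) - x). *)
Definition interp_err_const (m : nat) : R := (INR m + 1) * INR m ^ (2 * m + 1) + INR m ^ m.

Lemma interp_err_const_nonneg m : 0 <= interp_err_const m.
Proof.
  unfold interp_err_const; pose proof (pos_INR m).
  apply Rplus_le_le_0_compat; [apply Rmult_le_pos|]; try apply pow_le; lra.
Qed.

Lemma interp_error u dt m s x K : (1 <= m <= 6)%nat -> 0 < dt ->
  node dt s <= x <= node dt (s + m) ->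
  (forall t, node dt s <= t <= node dt (s + m) -> forall p, (p <= S m)%nat -> ex_derive_n u p t) ->
  (forall t, node dt s <= t <= node dt (s + m) -> Rabs (Derive_n u (S m) t) <= K) ->
  Rabs (Defs.interp u dt m s x - u x) <= interp_err_const m * K * dt ^ m * (node dt (s + m) - x).
Proof.
  intros Hm Hdt Hx Hd HK.
  rewrite interp_sub_taylor_remainder by (auto; lra); cbv zeta.
  set (b := node dt (s + m)) in *; set (th := (x - node dt s) / dt).
  set (rem := fun y => u y - taylor u m b y).
  assert (Hb : b = node dt s + INR m * dt) by apply node_add.
  assert (HK0 : 0 <= K) by (eapply Rle_trans; [apply Rabs_pos | apply (HK x Hx)]).
  assert (Hth : 0 <= th <= INR m).
  { unfold th; split; [apply Rmult_le_pos; [lra | left; apply Rinv_0_lt_compat; auto]|].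
    apply (Rmult_le_reg_r dt); auto; unfold Rdiv; rewrite Rmult_assoc, Rinv_l; lra. }
  assert (Hbx : b - x = (INR m - th) * dt) by (unfold th; rewrite Hb; field; lra).
  assert (Hrem : forall y, node dt s <= y <= b -> Rabs (rem y) <= K * (b - y) ^ S m)
    by (intros y Hy; apply (taylor_remainder_bound_left u m (node dt s)); auto).
  assert (Hterm : forall l, (l < S m)%nat ->
     Rabs (rem (node dt (s + l)) * lagrange_basis m l th) <= K * INR m ^ (2 * m + 1) * dt ^ m * (b - x)).
  { intros l Hl; destruct (Nat.eq_dec l m) as [->|Hlm].
    - unfold rem; fold b; rewrite taylor_center, Rminus_diag, Rmult_0_l, Rabs_R0.
      rewrite Hbx; pose proof (pos_INR m).
      repeat apply Rmult_le_pos; try apply pow_le; lra.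
    - assert (Hl' : INR l <= INR m) by (apply le_INR; lia); pose proof (pos_INR l).
      assert (Hr : Rabs (rem (node dt (s + l))) <= K * (INR m * dt) ^ S m).
      { eapply Rle_trans; [apply Hrem; rewrite node_add, Hb; nra|].
        apply Rmult_le_compat_l, pow_incr; auto; rewrite Hb, node_add; nra. }
      rewrite Rabs_mult; eapply Rle_trans.
      + apply Rmult_le_compat; try apply Rabs_pos; [exact Hr | apply lagrange_basis_abs_le; auto; lia].
      + rewrite Hbx, Rpow_mult_distr; replace (2 * m + 1)%nat with (S m + m)%nat by lia.
        rewrite pow_add; simpl pow; right; ring. }
  eapply Rle_trans; [apply Rabs_triang|]; rewrite Rabs_Ropp.
  eapply Rle_trans; [apply Rplus_le_compat; [apply sumR_abs_le, Hterm | apply (Hrem x); lra]|].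
  assert ((b - x) ^ m <= (INR m * dt) ^ m) by (apply pow_incr; nra).
  assert (0 <= (b - x) ^ m) by (apply pow_le; lra).
  assert (K * (b - x) ^ m * (b - x) <= K * (INR m * dt) ^ m * (b - x)).
  { apply Rmult_le_compat_r; [lra | apply Rmult_le_compat_l; auto]. }
  rewrite S_INR, Rpow_mult_distr in *; unfold interp_err_const; simpl pow; nra.
Qed.

(** * Integrals against the kernel (t - x)^(-al) *)

Lemma is_RInt_continuous (f : R -> R) a b : a <= b ->
  (forall x, a <= x <= b -> continuous f x) -> is_RInt f a b (RInt f a b).
Proof.
  intros Hab Hf; apply (RInt_correct (V := R_CompleteNormedModule)).
  apply (ex_RInt_continuous (V := R_CompleteNormedModule)); intros z Hz.
  rewrite Rmin_left, Rmax_right in Hz by auto; auto.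
Qed.

Lemma is_RInt_derive_le (f df : R -> R) a b : a <= b ->
  (forall x, a <= x <= b -> is_derive f x (df x)) ->
  (forall x, a <= x <= b -> continuous df x) -> is_RInt df a b (f b - f a).
Proof.
  intros Hab Hd Hc; apply (is_RInt_derive (V := R_CompleteNormedModule));
    intros x Hx; rewrite Rmin_left, Rmax_right in Hx by auto; auto.
Qed.

Lemma is_RInt_abs_le (f g : R -> R) a b If Ig : a <= b -> is_RInt f a b If -> is_RInt g a b Ig ->
  (forall x, a < x < b -> Rabs (f x) <= g x) -> Rabs If <= Ig.
Proof.
  intros Hab Hf Hg Hfg; apply Rabs_le; split.
  - replace (- Ig) with (-1 * Ig) by ring.
    apply (is_RInt_le (fun x => -1 * g x) f a b); auto.
    + apply (is_RInt_scal (V := R_NormedModule)); auto.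
    + intros x Hx; specialize (Hfg x Hx); apply Rabs_le_between in Hfg; lra.
  - apply (is_RInt_le f g a b); auto.
    intros x Hx; specialize (Hfg x Hx); apply Rabs_le_between in Hfg; lra.
Qed.

Definition C1 (f : R -> R) : Prop :=
  exists df : R -> R, (forall x, is_derive f x (df x)) /\ (forall x, continuous df x).

Lemma C1_Derive f : C1 f ->
  (forall x, is_derive f x (Derive f x)) /\ (forall x, continuous (Derive f) x).
Proof.
  intros [df [Hd Hc]].
  assert (E : forall x, Derive f x = df x) by (intros; apply is_derive_unique; auto).
  split; intros x; [rewrite E; auto | apply (continuous_ext df); auto].
Qed.

Lemma C1_const c : C1 (fun _ => c).
Proof. exists (fun _ => 0); split; intros; [auto_derive; auto | apply continuous_const]. Qed.

Lemma C1_plus f g : C1 f -> C1 g -> C1 (fun x => f x + g x).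
Proof.
  intros [df [Hf Hf']] [dg [Hg Hg']]; exists (fun x => df x + dg x).
  split; intros; [apply (is_derive_plus f g) | apply continuous_Rplus]; auto.
Qed.

Lemma C1_mult f g : C1 f -> C1 g -> C1 (fun x => f x * g x).
Proof.
  intros [df [Hf Hf']] [dg [Hg Hg']]; exists (fun x => df x * g x + f x * dg x).
  split.
  - intros x; apply (is_derive_mult f g); auto; apply Rmult_comm.
  - intros x; apply continuous_Rplus; apply continuous_Rmult; eauto using is_derive_continuous.
Qed.

Lemma C1_sumR N (F : nat -> R -> R) : (forall l, C1 (F l)) -> C1 (fun x => sumR N (fun l => F l x)).
Proof. intros H; induction N as [|N IH]; simpl; [apply C1_const | apply (C1_plus _ (F N)); auto]. Qed.

Lemma C1_prodR N (F : nat -> R -> R) : (forall l, C1 (F l)) -> C1 (fun x => prodR N (fun l => F l x)).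
Proof. intros H; induction N as [|N IH]; simpl; [apply C1_const | apply (C1_mult _ (F N)); auto]. Qed.

Lemma C1_interp u dt m s : C1 (Defs.interp u dt m s).
Proof.
  apply (C1_sumR _ (fun l x => u (node dt (s + l)) * prodR (S m) (fun r =>
    if Nat.eqb r l then 1 else (x - node dt (s + r)) / (node dt (s + l) - node dt (s + r))))).
  intros l; apply C1_mult; [apply C1_const|].
  apply (C1_prodR _ (fun r x =>
    if Nat.eqb r l then 1 else (x - node dt (s + r)) / (node dt (s + l) - node dt (s + r)))).
  intros r; destruct (Nat.eqb r l); [apply C1_const|].
  exists (fun _ => / (node dt (s + l) - node dt (s + r))); split; intros x.
  - apply (is_derive_ext (fun y => (y - node dt (s + r)) * / (node dt (s + l) - node dt (s + r))));
      [reflexivity | auto_derive; auto; ring].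
  - apply continuous_const.
Qed.

Lemma Rpower_gt_0 x q : 0 < Rpower x q.
Proof. apply exp_pos. Qed.

Lemma Rpower_le_nonpos x y q : q <= 0 -> 0 < x <= y -> Rpower y q <= Rpower x q.
Proof.
  intros Hq Hxy; unfold Rpower.
  assert (ln x <= ln y) by (destruct Hxy as [Hx [Hlt | ->]]; [left; apply ln_increasing | ]; lra).
  destruct (Req_dec (q * ln y) (q * ln x)) as [-> | Hne]; [lra|].
  left; apply exp_increasing; nra.
Qed.

Lemma is_derive_Rpower_sub t q x : x < t ->
  is_derive (fun y => Rpower (t - y) q) x (- (q * Rpower (t - x) (q - 1))).
Proof.
  intros Hx.
  assert (Hp : is_derive (fun z => Rpower z q) (t - x) (q * Rpower (t - x) (q - 1)))
    by (apply is_derive_Reals, derivable_pt_lim_power; lra).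
  assert (Hl : is_derive (fun y => t - y) x (-1)) by (auto_derive; auto; ring).
  pose proof (is_derive_comp _ _ x _ _ Hp Hl) as Hc; simpl in Hc.
  replace (- (q * Rpower (t - x) (q - 1))) with (-1 * (q * Rpower (t - x) (q - 1))) by ring.
  exact Hc.
Qed.

Lemma continuous_Rpower_sub t q x : x < t -> continuous (fun y => Rpower (t - y) q) x.
Proof. intros Hx; eapply is_derive_continuous, is_derive_Rpower_sub, Hx. Qed.

Lemma is_RInt_Rpower_sub t al a b : a <= b < t -> al < 1 ->
  is_RInt (fun x => Rpower (t - x) (-al)) a b
    ((Rpower (t - a) (1 - al) - Rpower (t - b) (1 - al)) / (1 - al)).
Proof.
  intros Hab Hal.
  replace ((Rpower (t - a) (1 - al) - Rpower (t - b) (1 - al)) / (1 - al))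
    with (- / (1 - al) * Rpower (t - b) (1 - al) - - / (1 - al) * Rpower (t - a) (1 - al))
    by (field; lra).
  apply (is_RInt_derive_le (fun x => - / (1 - al) * Rpower (t - x) (1 - al))); [lra | |].
  - intros x Hx; eapply is_derive_ext; [reflexivity|].
    replace (Rpower (t - x) (- al))
      with (- / (1 - al) * - ((1 - al) * Rpower (t - x) (1 - al - 1)))
      by (replace (1 - al - 1) with (- al) by ring; field; lra).
    apply is_derive_scal, is_derive_Rpower_sub; lra.
  - intros x Hx; apply continuous_Rpower_sub; lra.
Qed.

Lemma is_RInt_Rpower_sub_deriv t al a b : a <= b < t ->
  is_RInt (fun x => al * Rpower (t - x) (-al - 1)) a b (Rpower (t - b) (-al) - Rpower (t - a) (-al)).
Proof.
  intros Hab; apply (is_RInt_derive_le (fun x => Rpower (t - x) (-al))); [lra | |].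
  - intros x Hx; replace (al * Rpower (t - x) (- al - 1)) with (- (- al * Rpower (t - x) (- al - 1)))
      by ring.
    apply is_derive_Rpower_sub; lra.
  - intros x Hx; apply continuous_Rmult; [apply continuous_const | apply continuous_Rpower_sub; lra].
Qed.

Lemma is_RInt_weighted_by_parts (e de : R -> R) a c t al : a < c < t ->
  (forall x, a <= x <= c -> is_derive e x (de x)) -> (forall x, a <= x <= c -> continuous de x) ->
  exists V, is_RInt (fun x => al * Rpower (t - x) (-al - 1) * e x) a c V /\
    is_RInt (fun x => Rpower (t - x) (-al) * de x) a c
      (Rpower (t - c) (-al) * e c - Rpower (t - a) (-al) * e a - V).
Proof.
  intros Hac Hd Hc.
  set (g := fun x => al * Rpower (t - x) (-al - 1) * e x).
  assert (Hg : forall x, a <= x <= c -> continuous g x).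
  { intros x Hx; unfold g; apply continuous_Rmult; [apply continuous_Rmult|].
    - apply continuous_const.
    - apply continuous_Rpower_sub; lra.
    - eapply is_derive_continuous, Hd; auto. }
  exists (RInt g a c); split; [apply is_RInt_continuous; auto; lra|].
  assert (HF : is_RInt (fun x => g x + Rpower (t - x) (-al) * de x) a c
                 (Rpower (t - c) (-al) * e c - Rpower (t - a) (-al) * e a)).
  { apply (is_RInt_derive_le (fun x => Rpower (t - x) (-al) * e x)); [lra | |].
    - intros x Hx; unfold g.
      replace (al * Rpower (t - x) (- al - 1) * e x + Rpower (t - x) (- al) * de x)
        with (- (- al * Rpower (t - x) (- al - 1)) * e x + Rpower (t - x) (- al) * de x) by ring.
      apply (is_derive_mult (fun y => Rpower (t - y) (- al)) e);
        [apply is_derive_Rpower_sub; lra | apply Hd; auto | apply Rmult_comm].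
    - intros x Hx; apply continuous_Rplus; [apply Hg; auto|].
      apply continuous_Rmult; [apply continuous_Rpower_sub; lra | apply Hc; auto]. }
  pose proof (is_RInt_minus _ _ _ _ _ _ HF (is_RInt_continuous g a c ltac:(lra) Hg)) as Hm.
  eapply is_RInt_ext; [|exact Hm]; intros x _; simpl; unfold minus, plus, opp; simpl; ring.
Qed.

Lemma Rpower_pred_mul y q : 0 < y -> Rpower y (q - 1) * y = Rpower y q.
Proof. intros; rewrite <- (Rpower_1 y) at 2 by auto; rewrite <- Rpower_plus; f_equal; ring. Qed.

Lemma weighted_linear_error_abs_le e D t b h al : al < 1 -> 0 <= D -> 0 < t - b <= h ->
  Rabs e <= D * (t - b) -> Rabs (Rpower (t - b) (-al) * e) <= D * Rpower h (1 - al).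
Proof.
  intros Hal HD Hb He.
  rewrite Rabs_mult, Rabs_right by apply Rle_ge, Rlt_le, Rpower_gt_0.
  eapply Rle_trans; [apply Rmult_le_compat_l; [apply Rlt_le, Rpower_gt_0 | exact He]|].
  replace (Rpower (t - b) (- al) * (D * (t - b))) with (D * (Rpower (t - b) (1 - al - 1) * (t - b)))
    by (replace (1 - al - 1) with (- al) by ring; ring).
  rewrite Rpower_pred_mul by lra; apply Rmult_le_compat_l, Rle_Rpower_l; lra.
Qed.

Lemma weighted_integral_linear_error_abs_le (e : R -> R) D t a b al V : 0 < al < 1 -> 0 <= D ->
  a <= b < t -> is_RInt (fun x => al * Rpower (t - x) (-al - 1) * e x) a b V ->
  (forall x, a < x < b -> Rabs (e x) <= D * (t - x)) ->
  Rabs V <= al * D * (Rpower (t - a) (1 - al) / (1 - al)).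
Proof.
  intros Hal HD Hab HV He.
  eapply Rle_trans.
  - eapply (is_RInt_abs_le _ (fun x => al * D * Rpower (t - x) (-al)) a b); [lra | exact HV | |].
    + apply (is_RInt_scal (V := R_NormedModule)), is_RInt_Rpower_sub; lra.
    + intros x Hx; cbv beta; rewrite !Rabs_mult, Rabs_right, (Rabs_right (Rpower _ _))
        by (apply Rle_ge, Rlt_le, Rpower_gt_0 || lra).
      eapply Rle_trans; [apply Rmult_le_compat_l; [apply Rmult_le_pos; [lra | apply Rlt_le, Rpower_gt_0] | apply He; lra]|].
      replace (al * Rpower (t - x) (- al - 1) * (D * (t - x))) with (al * D * (Rpower (t - x) (- al - 1) * (t - x)))
        by ring.
      rewrite Rpower_pred_mul by lra; lra.
  - pose proof (Rpower_gt_0 (t - b) (1 - al)).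
    apply Rmult_le_compat_l; [apply Rmult_le_pos; lra|].
    unfold Rdiv; apply Rmult_le_compat_r; [apply Rlt_le, Rinv_0_lt_compat|]; lra.
Qed.

(** * Weakly singular improper integrals *)

Lemma continuous_bounded (f : R -> R) a b : a <= b -> (forall x, a <= x <= b -> continuous f x) ->
  exists K, 0 <= K /\ forall x, a <= x <= b -> Rabs (f x) <= K.
Proof.
  intros Hab Hf.
  destruct (continuity_ab_maj (fun x => Rabs (f x)) a b Hab) as [c [Hc _]].
  - intros x Hx; apply continuity_pt_filterlim, continuous_Rabs_comp, Hf; auto.
  - exists (Rabs (f c)); split; [apply Rabs_pos | auto].
Qed.

Lemma RInt_abs_le_weakly_singular (f : R -> R) t G al u v : al < 1 -> 0 <= G -> u <= v < t ->
  ex_RInt f u v -> (forall x, u < x < v -> Rabs (f x) <= G * Rpower (t - x) (-al)) ->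
  Rabs (RInt f u v) <= G * Rpower (t - u) (1 - al) / (1 - al).
Proof.
  intros Hal HG Huv Hf Hb.
  eapply Rle_trans.
  - apply (is_RInt_abs_le f (fun x => G * Rpower (t - x) (-al)) u v); [lra | | | exact Hb].
    + apply (RInt_correct (V := R_CompleteNormedModule)), Hf.
    + apply (is_RInt_scal (V := R_NormedModule)), is_RInt_Rpower_sub; lra.
  - pose proof (Rpower_gt_0 (t - v) (1 - al)).
    unfold Rdiv; rewrite <- Rmult_assoc; apply Rmult_le_compat_r; [left; apply Rinv_0_lt_compat; lra|].
    apply Rmult_le_compat_l; simpl; lra.
Qed.

Lemma at_left_between c t : c < t -> at_left t (fun b => c < b < t).
Proof.
  intros Hct; exists (mkposreal (t - c) ltac:(lra)); intros y Hy Hyt.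
  change (Rabs (y - t) < t - c) in Hy.
  apply Rabs_lt_between in Hy; lra.
Qed.

Lemma Rpower_tail_small G al eps : 0 < al < 1 -> 0 <= G -> 0 < eps ->
  exists d, 0 < d /\ forall y, 0 < y < d -> G * Rpower y (1 - al) / (1 - al) < eps.
Proof.
  intros Hal HG Heps.
  set (z := eps * (1 - al) / (G + 1)).
  assert (Hz : 0 < z) by (apply Rdiv_lt_0_compat; [apply Rmult_lt_0_compat|]; lra).
  exists (Rpower z (/ (1 - al))); split; [apply Rpower_gt_0|]; intros y Hy.
  assert (Hyz : Rpower y (1 - al) < z).
  { replace z with (Rpower (Rpower z (/ (1 - al))) (1 - al))
      by (rewrite Rpower_mult; replace (/ (1 - al) * (1 - al)) with 1 by (field; lra); apply Rpower_1; lra).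
    apply Rlt_Rpower_l; lra. }
  assert (HGz : G * z / (1 - al) = eps * (G / (G + 1))) by (unfold z; field; lra).
  assert (G / (G + 1) < 1).
  { apply (Rmult_lt_reg_r (G + 1)); [lra|]; unfold Rdiv; rewrite Rmult_assoc, Rinv_l; lra. }
  apply Rle_lt_trans with (G * z / (1 - al)); [|nra].
  unfold Rdiv; apply Rmult_le_compat_r; [apply Rlt_le, Rinv_0_lt_compat; lra|].
  apply Rmult_le_compat_l; lra.
Qed.

Lemma is_RInt_gen_at_left (f : R -> R) t c l : c < t ->
  (forall b, c < b < t -> ex_RInt f 0 b) ->
  filterlim (fun b => RInt f 0 b) (at_left t) (locally l) ->
  is_RInt_gen f (at_point 0) (at_left t) l.
Proof.
  intros Hct Hex Hl P HP.
  apply (Filter_prod _ _ _ (fun a => a = 0) (fun b => (c < b < t) /\ P (RInt f 0 b))).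
  - reflexivity.
  - apply filter_and; [apply at_left_between; lra | apply Hl, HP].
  - intros a b -> [Hbt HPb]; exists (RInt f 0 b); split; auto.
    apply (RInt_correct (V := R_CompleteNormedModule)), Hex; lra.
Qed.

Lemma ex_RInt_gen_weakly_singular (f : R -> R) t c G al : 0 < al < 1 -> 0 <= c < t -> 0 <= G ->
  (forall b, c < b < t -> ex_RInt f 0 b) ->
  (forall x, c < x < t -> Rabs (f x) <= G * Rpower (t - x) (-al)) ->
  exists l, is_RInt_gen f (at_point 0) (at_left t) l.
Proof.
  intros Hal Hc HG Hex Hb.
  set (F := fun b => RInt f 0 b).
  assert (Htail : forall u v, c < u <= v -> v < t ->
            Rabs (F v - F u) <= G * Rpower (t - u) (1 - al) / (1 - al)).
  { intros u v Huv Hvt.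
    assert (Huv' : ex_RInt f u v)
      by (apply (ex_RInt_Chasles_2 (V := R_CompleteNormedModule) f 0); [lra | apply Hex; lra]).
    replace (F v - F u) with (RInt f u v).
    - apply RInt_abs_le_weakly_singular; auto; try lra.
      intros x Hx; apply Hb; lra.
    - unfold F; rewrite <- (RInt_Chasles (V := R_CompleteNormedModule) f 0 u v); auto.
      + symmetry; apply Rplus_minus_l.
      + apply Hex; lra. }
  assert (HL : exists l, filterlim F (at_left t) (locally l)).
  { apply (proj1 (filterlim_locally_cauchy (U := R_CompleteSpace) (F := at_left t) F)).
    intros eps; destruct (Rpower_tail_small G al eps Hal HG (cond_pos eps)) as [d [Hd Hsmall]].
    exists (fun b => Rmax c (t - d) < b < t); split.
    - apply at_left_between, Rmax_lub_lt; lra.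
    - intros u v Hu Hv; change (Rabs (F v - F u) < eps).
      pose proof (Rmax_l c (t - d)); pose proof (Rmax_r c (t - d)).
      destruct (Rle_dec u v); [| rewrite Rabs_minus_sym];
        (eapply Rle_lt_trans; [apply Htail; lra | apply Hsmall; lra]). }
  destruct HL as [l Hl]; exists l; apply (is_RInt_gen_at_left f t c); auto; lra.
Qed.

Lemma is_RInt_gen_abs_le (h : R -> R) t c l B : c < t ->
  is_RInt_gen h (at_point 0) (at_left t) l ->
  (forall b, c < b < t -> exists v, is_RInt h 0 b v /\ Rabs v <= B) -> Rabs l <= B.
Proof.
  intros Hct Hl Hb; apply Rnot_lt_le; intros Hlt.
  set (eps := (Rabs l - B) / 2).
  assert (HP : locally l (fun y => Rabs (y - l) < eps))
    by (exists (mkposreal eps ltac:(unfold eps; lra)); intros y Hy; exact Hy).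
  destruct (Hl _ HP) as [Q S HQ HS Himp].
  destruct (filter_and _ _ HS (at_left_between c t Hct)) as [d Hd].
  set (b := Rmax (t - d / 2) ((c + t) / 2)).
  assert (Hbd : S b /\ c < b < t).
  { pose proof (cond_pos d).
    assert (Hb' : t - d / 2 <= b /\ (c + t) / 2 <= b /\ b < t)
      by (unfold b; split; [apply Rmax_l | split; [apply Rmax_r | apply Rmax_lub_lt; lra]]).
    apply Hd; [change (Rabs (b - t) < d); apply Rabs_lt_between | ]; lra. }
  destruct Hbd as [HSb Hcb].
  destruct (Himp 0 b HQ HSb) as [y [Hy Hyl]]; simpl in Hy, Hyl.
  destruct (Hb b Hcb) as [v [Hv HvB]].
  replace y with v in Hyl
    by (apply (is_RInt_unique (V := R_CompleteNormedModule)) in Hy, Hv; congruence).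
  assert (Rabs l <= Rabs v + Rabs (v - l)).
  { replace l with (v - (v - l)) at 1 by ring. eapply Rle_trans; [apply Rabs_triang|].
    rewrite Rabs_Ropp; lra. }
  unfold eps in *; lra.
Qed.

(** * Consistency of the scheme *)

Lemma weighted_sum_le_mult_sum a c A B x y : 0 <= a <= c -> 0 <= A -> 0 <= B -> 0 <= x -> 0 <= y ->
  a * A * x + B * y <= (c * A + B) * (x + y).
Proof.
  intros Ha HA HB Hx Hy.
  assert (0 <= (c - a) * A * x) by (apply Rmult_le_pos; [apply Rmult_le_pos|]; lra).
  assert (0 <= c * A * y) by (apply Rmult_le_pos; [apply Rmult_le_pos|]; lra).
  assert (0 <= B * x) by (apply Rmult_le_pos; lra).
  nra.
Qed.

Definition RInt_gap_le (f g : R -> R) (a b B : R) : Prop :=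
  exists vf vg, is_RInt f a b vf /\ is_RInt g a b vg /\ Rabs (vf - vg) <= B.

Lemma RInt_gap_le_Chasles f g a b c B1 B2 :
  RInt_gap_le f g a b B1 -> RInt_gap_le f g b c B2 -> RInt_gap_le f g a c (B1 + B2).
Proof.
  intros [vf [vg [Hf [Hg HB]]]] [wf [wg [Hf' [Hg' HB']]]].
  exists (vf + wf), (vg + wg); split; [|split].
  - exact (is_RInt_Chasles (V := R_NormedModule) _ _ _ _ _ _ Hf Hf').
  - exact (is_RInt_Chasles (V := R_NormedModule) _ _ _ _ _ _ Hg Hg').
  - replace (vf + wf - (vg + wg)) with ((vf - vg) + (wf - wg)) by ring.
    eapply Rle_trans; [apply Rabs_triang | lra].
Qed.

Lemma RInt_gap_le_weaken f g a b B B' : B <= B' -> RInt_gap_le f g a b B -> RInt_gap_le f g a b B'.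
Proof. intros HB [vf [vg [Hf [Hg H]]]]; exists vf, vg; repeat split; auto; lra. Qed.

Definition weighted_deriv (al t : R) (g : R -> R) (xi : R) : R := Rpower (t - xi) (-al) * Derive g xi.

(* Coefficients of the two error terms: degree k - 1 interpolation on the
   first k - i cells, degree k on the others. *)
Definition initial_err_coeff (al : R) (k : nat) (K0 : R) : R :=
  INR (k - 1) * al * interp_err_const (k - 1) * K0.
Definition interior_err_coeff (al : R) (k : nat) (K1 : R) : R :=
  interp_err_const k * K1 * (INR k + / (1 - al)).

Section Consistency.

Variables (al dt : R) (k i n : nat) (u : R -> R) (K0 K1 : R).
Hypothesis Hal : 0 < al < 1.
Hypothesis Hik : (1 <= i <= k)%nat.
Hypothesis Hk6 : (k <= 6)%nat.
Hypothesis Hkn : (k <= n)%nat.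
Hypothesis Hdt : 0 < dt.
Hypothesis Hu : forall x, 0 <= x <= node dt n -> forall m, (m <= k + 1)%nat -> ex_derive_n u m x.
Hypothesis HK0 : forall x, 0 <= x <= node dt n -> Rabs (Derive_n u k x) <= K0.
Hypothesis HK1 : forall x, 0 <= x <= node dt n -> Rabs (Derive_n u (S k) x) <= K1.

Lemma K0_nonneg : 0 <= K0.
Proof. eapply Rle_trans; [apply Rabs_pos | apply (HK0 0)]; split; [lra | apply node_nonneg; lra]. Qed.

Lemma K1_nonneg : 0 <= K1.
Proof. eapply Rle_trans; [apply Rabs_pos | apply (HK1 0)]; split; [lra | apply node_nonneg; lra]. Qed.

Let hP := weighted_deriv al (node dt n) (Pkin u dt k i n).
Let hu := weighted_deriv al (node dt n) u.

Lemma weighted_error_by_parts m s a c : 0 <= a < c -> c < node dt n ->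
  (forall x, a < x < c -> Derive (Pkin u dt k i n) x = Derive (Defs.interp u dt m s) x) ->
  exists xP xu V, is_RInt hP a c xP /\ is_RInt hu a c xu /\
   is_RInt (fun x => al * Rpower (node dt n - x) (-al - 1) * (Defs.interp u dt m s x - u x)) a c V /\
   xP - xu = Rpower (node dt n - c) (-al) * (Defs.interp u dt m s c - u c)
             - Rpower (node dt n - a) (-al) * (Defs.interp u dt m s a - u a) - V.
Proof.
  intros Hac Hct HD.
  destruct (C1_Derive _ (C1_interp u dt m s)) as [Hpd Hpc].
  assert (Hud : forall x, a <= x <= c -> is_derive u x (Derive u x))
    by (intros x Hx; apply Derive_correct, (Hu x ltac:(lra) 1%nat); lia).
  assert (Huc : forall x, a <= x <= c -> continuous (Derive u) x).
  { intros x Hx; destruct (Hu x ltac:(lra) 2%nat ltac:(lia)) as [l Hl].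
    eapply is_derive_continuous, Hl. }
  destruct (is_RInt_weighted_by_parts (fun x => Defs.interp u dt m s x - u x)
              (fun x => Derive (Defs.interp u dt m s) x - Derive u x) a c (node dt n) al)
    as [V [HV Hw]]; [lra | intros x Hx; apply (is_derive_minus _ u); auto | |].
  { intros x Hx; apply (continuous_minus (U := R_UniformSpace) (V := R_NormedModule)); auto. }
  assert (Hxu : is_RInt hu a c (RInt hu a c)).
  { apply is_RInt_continuous; [lra|]; intros x Hx.
    apply continuous_Rmult; [apply continuous_Rpower_sub; lra | auto]. }
  eexists; exists (RInt hu a c), V; split; [|split; [exact Hxu | split; [exact HV|]]].
  - eapply is_RInt_ext; [|exact (is_RInt_plus _ _ _ _ _ _ Hw Hxu)].
    intros x Hx; rewrite Rmin_left, Rmax_right in Hx by lra.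
    unfold hu, hP, weighted_deriv; rewrite (HD x Hx); simpl; unfold plus; simpl; ring.
  - simpl; unfold plus; simpl; ring.
Qed.

Lemma interp_error_on_stencil m s K x : (1 <= m <= k)%nat -> (s + m <= n)%nat ->
  (forall y, node dt s <= y <= node dt (s + m) -> Rabs (Derive_n u (S m) y) <= K) ->
  node dt s <= x <= node dt (s + m) ->
  Rabs (Defs.interp u dt m s x - u x) <= interp_err_const m * K * dt ^ m * (INR m * dt).
Proof.
  intros Hm Hsm HK Hx.
  assert (Hs : 0 <= node dt s) by (apply node_nonneg; lra).
  assert (Hsm' : node dt (s + m) <= node dt n) by (apply node_le; lia || lra).
  assert (0 <= K) by (eapply Rle_trans; [apply Rabs_pos | apply (HK x Hx)]).
  eapply Rle_trans; [apply interp_error; auto; try lia|].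
  - intros y Hy p Hp; apply Hu; lra || lia.
  - apply Rmult_le_compat_l; [pose proof (interp_err_const_nonneg m); apply Rmult_le_pos;
      [apply Rmult_le_pos|apply pow_le]; lra|].
    rewrite node_add in *; lra.
Qed.

Lemma cell_gap_le m s J (g : R -> R) Ig : (1 <= J <= n - 1)%nat -> (s + 1 <= J <= s + m)%nat ->
  (forall x, node dt (J - 1) < x < node dt J ->
     Derive (Pkin u dt k i n) x = Derive (Defs.interp u dt m s) x) ->
  is_RInt g (node dt (J - 1)) (node dt J) Ig ->
  (forall x, node dt (J - 1) < x < node dt J ->
     Rabs (al * Rpower (node dt n - x) (-al - 1) * (Defs.interp u dt m s x - u x)) <= g x) ->
  RInt_gap_le hP hu (node dt (J - 1)) (node dt J) Ig.
Proof.
  intros HJ HsJ HD Hg Hbound.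
  assert (Hcell : node dt (J - 1) < node dt J) by (apply node_lt; lia || lra).
  destruct (weighted_error_by_parts m s (node dt (J - 1)) (node dt J)) as [xP [xu [V [HxP [Hxu [HV HE]]]]]];
    auto; [split; [apply node_nonneg|]; lra | apply node_lt; lia || lra |].
  exists xP, xu; repeat split; auto.
  assert (Hnodal : forall l, (s <= l <= s + m)%nat -> Defs.interp u dt m s (node dt l) - u (node dt l) = 0).
  { intros l Hl; replace l with (s + (l - s))%nat by lia; rewrite interp_node by (lra || lia); ring. }
  rewrite !Hnodal in HE by lia.
  replace (xP - xu) with (- V) by lra; rewrite Rabs_Ropp.
  eapply (is_RInt_abs_le _ g (node dt (J - 1)) (node dt J)); eauto; lra.
Qed.

Let initial_stencil_err := interp_err_const (k - 1) * K0 * dt ^ (k - 1) * (INR (k - 1) * dt).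
Let interior_stencil_err := interp_err_const k * K1 * dt ^ k * (INR k * dt).

Lemma initial_cell_gap J : (1 <= J <= k - i)%nat -> (J <= n - 1)%nat ->
  RInt_gap_le hP hu (node dt (J - 1)) (node dt J)
    (dt * (al * Rpower (node dt (n - k + i)) (-al - 1) * initial_stencil_err)).
Proof.
  intros HJ HJn.
  set (w := al * Rpower (node dt n - node dt J) (-al - 1) * initial_stencil_err).
  assert (HE0 : 0 <= initial_stencil_err).
  { unfold initial_stencil_err; pose proof (interp_err_const_nonneg (k - 1)); pose proof (pos_INR (k - 1)).
    pose proof K0_nonneg.
    repeat apply Rmult_le_pos; try apply pow_le; lra. }
  assert (Hw : Rpower (node dt n - node dt J) (-al - 1) <= Rpower (node dt (n - k + i)) (-al - 1)).
  { apply Rpower_le_nonpos; [lra|]; rewrite node_sub by lia.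
    split; [apply node_pos; lia || lra | apply node_le; lia || lra]. }
  apply (RInt_gap_le_weaken _ _ _ _ ((node dt J - node dt (J - 1)) * w)).
  { rewrite node_pred by lia; unfold w.
    apply Rmult_le_compat_l; [lra|]; apply Rmult_le_compat_r; [auto|]; apply Rmult_le_compat_l; lra. }
  apply (cell_gap_le (k - 1) 0 J (fun _ => w)); try lia.
  - intros x Hx; rewrite (Derive_Pkin_on_cell u dt k i n J) by (auto; lia).
    apply Derive_ext; intros; rewrite piece_initial by lia; auto.
  - apply (is_RInt_const (V := R_NormedModule)).
  - intros x Hx; unfold w; rewrite !Rabs_mult, Rabs_right, (Rabs_right (Rpower _ _))
      by (apply Rle_ge, Rlt_le, Rpower_gt_0 || lra).
    assert (Hcell : node dt J < node dt n) by (apply node_lt; lia || lra).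
    apply Rmult_le_compat; try apply Rabs_pos.
    + pose proof (Rpower_gt_0 (node dt n - x) (-al - 1)); nra.
    + apply Rmult_le_compat_l; [lra | apply Rpower_le_nonpos; lra].
    + unfold initial_stencil_err; apply interp_error_on_stencil; try lia.
      * intros y Hy; replace (S (k - 1)) with k by lia; apply HK0.
        pose proof (node_nonneg dt 0 ltac:(lra)).
        assert (node dt (0 + (k - 1)) <= node dt n) by (apply node_le; lia || lra); lra.
      * assert (node dt 0 <= node dt (J - 1)) by (apply node_le; lia || lra).
        assert (node dt J <= node dt (0 + (k - 1))) by (apply node_le; lia || lra); lra.
Qed.

Lemma interior_cell_gap J : (k - i < J <= n - 1)%nat ->
  RInt_gap_le hP hu (node dt (J - 1)) (node dt J)
    (interior_stencil_err * (Rpower (node dt n - node dt J) (-al) - Rpower (node dt n - node dt (J - 1)) (-al))).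
Proof.
  intros HJ.
  destruct (piece_interior u dt k i n J) as [s [Hpiece [HsJ Hsn]]]; try lia.
  assert (Hcell : node dt J < node dt n) by (apply node_lt; lia || lra).
  assert (Hcell' : node dt (J - 1) <= node dt J) by (apply node_le; lia || lra).
  apply (cell_gap_le k s J (fun x => interior_stencil_err * (al * Rpower (node dt n - x) (-al - 1)))); try lia.
  - intros x Hx; rewrite (Derive_Pkin_on_cell u dt k i n J), Hpiece by (auto; lia); reflexivity.
  - apply (is_RInt_scal (V := R_NormedModule)), is_RInt_Rpower_sub_deriv; lra.
  - intros x Hx; rewrite !Rabs_mult, Rabs_right, (Rabs_right (Rpower _ _))
      by (apply Rle_ge, Rlt_le, Rpower_gt_0 || lra).
    rewrite Rmult_comm; apply Rmult_le_compat_r.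
    + pose proof (Rpower_gt_0 (node dt n - x) (-al - 1)); nra.
    + unfold interior_stencil_err; apply interp_error_on_stencil; try lia.
      * intros y Hy; apply HK1; pose proof (node_nonneg dt s ltac:(lra)).
        assert (node dt (s + k) <= node dt n) by (apply node_le; lia || lra); lra.
      * assert (node dt s <= node dt (J - 1)) by (apply node_le; lia || lra).
        assert (node dt J <= node dt (s + k)) by (apply node_le; lia || lra); lra.
Qed.

Lemma last_cell_gap b : node dt (n - 1) < b < node dt n ->
  RInt_gap_le hP hu (node dt (n - 1)) b
    (interp_err_const k * K1 * dt ^ k * Rpower dt (1 - al) / (1 - al)).
Proof.
  intros Hb.
  set (a := node dt (n - 1)) in *; set (t := node dt n) in *.
  set (D := interp_err_const k * K1 * dt ^ k).
  assert (Hta : t - a = dt) by (apply node_pred; lia).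
  pose proof K1_nonneg.
  assert (HD : 0 <= D) by (apply Rmult_le_pos; [apply Rmult_le_pos; [apply interp_err_const_nonneg | auto] | apply pow_le; lra]).
  assert (Hsa : node dt (n - k) <= a) by (apply node_le; lia || lra).
  assert (Herr : forall x, a <= x <= b -> Rabs (Defs.interp u dt k (n - k) x - u x) <= D * (t - x)).
  { intros x Hx; pose proof (node_nonneg dt (n - k) ltac:(lra)).
    replace t with (node dt (n - k + k)) by (unfold t; f_equal; lia).
    apply interp_error; try lia; try lra; replace (n - k + k)%nat with n by lia; fold t.
    - lra.
    - intros y Hy p Hp; apply Hu; lra || lia.
    - intros y Hy; apply HK1; lra. }
  destruct (weighted_error_by_parts k (n - k) a b) as [xP [xu [V [HxP [Hxu [HV HE]]]]]];
    [split; [apply node_nonneg|]; lra | fold t; lra | |].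
  { intros x Hx; unfold a, t in *.
    rewrite (Derive_Pkin_on_cell u dt k i n n), piece_last by (auto; lia || lra); reflexivity. }
  exists xP, xu; repeat split; auto.
  assert (Ha : Defs.interp u dt k (n - k) a - u a = 0).
  { unfold a; replace (n - 1)%nat with (n - k + (k - 1))%nat by lia.
    rewrite interp_node by (lra || lia); ring. }
  fold t in HE, HV; rewrite Ha, Rmult_0_r, Rminus_0_r in HE; rewrite HE.
  assert (Hboundary := weighted_linear_error_abs_le (Defs.interp u dt k (n - k) b - u b) D t b dt al
                         ltac:(lra) HD ltac:(lra) ltac:(apply Herr; lra)).
  assert (HVb := weighted_integral_linear_error_abs_le _ D t a b al V Hal HD ltac:(lra) HV
                   ltac:(intros x Hx; apply Herr; lra)).
  rewrite Hta in HVb.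
  unfold Rminus at 1; eapply Rle_trans; [apply Rabs_triang|]; rewrite Rabs_Ropp.
  replace (D * Rpower dt (1 - al) / (1 - al)) with (D * Rpower dt (1 - al) + al * D * (Rpower dt (1 - al) / (1 - al)))
    by (field; lra).
  lra.
Qed.

Lemma interior_stencil_err_nonneg : 0 <= interior_stencil_err.
Proof.
  unfold interior_stencil_err; pose proof (interp_err_const_nonneg k); pose proof (pos_INR k).
  pose proof K1_nonneg.
  repeat apply Rmult_le_pos; try apply pow_le; lra.
Qed.

Lemma initial_segment_gap j : (j <= n - 1)%nat ->
  RInt_gap_le hP hu (node dt 0) (node dt j)
    (INR (Nat.min j (k - i)) * (dt * (al * Rpower (node dt (n - k + i)) (-al - 1) * initial_stencil_err))
     + interior_stencil_err * (Rpower (node dt n - node dt j) (-al) - Rpower (node dt n - node dt 0) (-al))).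
Proof.
  induction j as [|j IH]; intros Hj.
  - exists 0, 0; split; [|split]; try apply (is_RInt_point (V := R_NormedModule)).
    rewrite Rminus_diag, Rabs_R0, Rminus_diag, Rmult_0_r; simpl; lra.
  - assert (Hw : Rpower (node dt n - node dt j) (- al) <= Rpower (node dt n - node dt (S j)) (- al)).
    { apply Rpower_le_nonpos; [lra|]; rewrite node_sub by lia; split; [apply node_pos; lia || lra|].
      rewrite <- node_sub by lia; assert (node dt j <= node dt (S j)) by (apply node_le; lia || lra); lra. }
    pose proof interior_stencil_err_nonneg.
    destruct (Nat.le_gt_cases (S j) (k - i)) as [Hini | Hint].
    + eapply RInt_gap_le_weaken; [| apply RInt_gap_le_Chasles with (b := node dt j);
        [apply IH; lia | replace j with (S j - 1)%nat at 1 by lia; apply initial_cell_gap; lia]].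
      replace (Nat.min (S j) (k - i)) with (S (Nat.min j (k - i))) by lia; rewrite S_INR.
      assert (interior_stencil_err * (Rpower (node dt n - node dt j) (- al) - Rpower (node dt n - node dt 0) (- al)) <=
              interior_stencil_err * (Rpower (node dt n - node dt (S j)) (- al) - Rpower (node dt n - node dt 0) (- al)))
        by (apply Rmult_le_compat_l; lra).
      lra.
    + eapply RInt_gap_le_weaken; [| apply RInt_gap_le_Chasles with (b := node dt j);
        [apply IH; lia | replace j with (S j - 1)%nat at 1 by lia; apply interior_cell_gap; lia]].
      replace (Nat.min (S j) (k - i)) with (Nat.min j (k - i)) by lia.
      replace (S j - 1)%nat with j by lia; lra.
Qed.

Lemma truncated_gap b : node dt (n - 1) < b < node dt n ->
  RInt_gap_le hP hu 0 b
    (INR (k - i) * initial_err_coeff al k K0 * Rpower (node dt (n - k + i)) (-al - 1) * dt ^ (k + 1)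
     + interior_err_coeff al k K1 * Rpower dt (INR (k + 1) - al)).
Proof.
  intros Hb.
  assert (Hnode0 : node dt 0 = 0) by (unfold node; simpl; ring).
  pose proof interior_stencil_err_nonneg.
  pose proof (Rpower_gt_0 (node dt n - node dt 0) (- al)).
  eapply RInt_gap_le_weaken; [| rewrite <- Hnode0; apply RInt_gap_le_Chasles with (b := node dt (n - 1));
    [apply initial_segment_gap; lia | apply last_cell_gap; auto]].
  rewrite node_pred by lia.
  replace (Nat.min (n - 1) (k - i)) with (k - i)%nat by lia.
  set (R0 := Rpower (node dt (n - k + i)) (-al - 1)); set (W := Rpower dt (INR (k + 1) - al)).
  assert (Hdtk : Rpower dt (INR (k + 1) - al) = dt ^ k * Rpower dt (1 - al)).
  { rewrite <- Rpower_pow by lra; rewrite <- Rpower_plus, plus_INR; f_equal; simpl; ring. }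
  assert (F0 : dt * (al * R0 * initial_stencil_err) = initial_err_coeff al k K0 * R0 * dt ^ (k + 1)).
  { unfold initial_stencil_err, initial_err_coeff; replace (k + 1)%nat with (S (S (k - 1))) by lia; simpl pow; ring. }
  assert (F1 : interior_stencil_err * Rpower dt (- al) = interp_err_const k * K1 * INR k * W).
  { unfold interior_stencil_err, W; rewrite Hdtk; replace (- al) with (1 - al - 1) by ring.
    rewrite <- (Rpower_pred_mul dt (1 - al)) by lra; ring. }
  assert (F2 : interp_err_const k * K1 * dt ^ k * Rpower dt (1 - al) / (1 - al)
               = interp_err_const k * K1 / (1 - al) * W) by (unfold W; rewrite Hdtk; field; lra).
  assert (0 <= interior_stencil_err * Rpower (node dt n - node dt 0) (- al)) by (apply Rmult_le_pos; lra).
  replace (interior_err_coeff al k K1 * W) with (interp_err_const k * K1 * INR k * W + interp_err_const k * K1 / (1 - al) * W)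
    by (unfold interior_err_coeff; field; lra).
  rewrite F0, F2, Rmult_minus_distr_l, F1; lra.
Qed.

Lemma weighted_derivs_integrable : exists lP lu,
  is_RInt_gen hP (at_point 0) (at_left (node dt n)) lP /\
  is_RInt_gen hu (at_point 0) (at_left (node dt n)) lu.
Proof.
  set (t := node dt n).
  assert (Hlast : node dt (n - 1) < t) by (apply node_lt; lia || lra).
  assert (Hlast0 : 0 <= node dt (n - 1)) by (apply node_nonneg; lra).
  destruct (continuous_bounded (Derive u) 0 t) as [G0 [HG0 Hu']]; [lra | |].
  { intros x Hx; destruct (Hu x Hx 2%nat ltac:(lia)) as [l Hl]; eapply is_derive_continuous, Hl. }
  destruct (continuous_bounded (Derive (Defs.interp u dt k (n - k))) (node dt (n - 1)) t)
    as [G [HG HP']]; [lra | intros; apply C1_Derive, C1_interp |].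
  assert (Hweight : forall (g : R -> R) B x, x < t -> Rabs (Derive g x) <= B ->
            Rabs (weighted_deriv al t g x) <= B * Rpower (t - x) (-al)).
  { intros g B x Hx HB; unfold weighted_deriv.
    rewrite Rabs_mult, Rabs_right, Rmult_comm by apply Rle_ge, Rlt_le, Rpower_gt_0.
    apply Rmult_le_compat_r; [apply Rlt_le, Rpower_gt_0 | exact HB]. }
  assert (Hpartial : forall b, node dt (n - 1) < b < t -> ex_RInt hP 0 b /\ ex_RInt hu 0 b).
  { intros b Hb; destruct (truncated_gap b Hb) as [vP [vu [HvP [Hvu _]]]].
    split; [exists vP | exists vu]; auto. }
  destruct (ex_RInt_gen_weakly_singular hP t (node dt (n - 1)) G al) as [lP HlP]; auto; try lra.
  { intros b Hb; apply Hpartial; auto. }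
  { intros x Hx; apply Hweight; [lra|].
    rewrite (Derive_Pkin_on_cell u dt k i n n), piece_last by (auto; lia || lra); apply HP'; lra. }
  destruct (ex_RInt_gen_weakly_singular hu t (node dt (n - 1)) G0 al) as [lu Hlu]; auto; try lra.
  { intros b Hb; apply Hpartial; auto. }
  { intros x Hx; apply Hweight, Hu'; lra. }
  exists lP, lu; auto.
Qed.

Lemma Dki_sub_caputo_abs_le :
  Rabs (Dki al k i u dt n - caputo al u (node dt n)) <=
  Rabs (/ Gamma (1 - al)) *
    (INR (k - i) * initial_err_coeff al k K0 * Rpower (node dt (n - k + i)) (-al - 1) * dt ^ (k + 1)
     + interior_err_coeff al k K1 * Rpower dt (INR (k + 1) - al)).
Proof.
  destruct weighted_derivs_integrable as [lP [lu [HlP Hlu]]].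
  assert (Hlast : node dt (n - 1) < node dt n) by (apply node_lt; lia || lra).
  assert (EP : RInt_gen (fun xi => Rpower (node dt n - xi) (- al) * Derive (Pkin u dt k i n) xi)
                 (at_point 0) (at_left (node dt n)) = lP) by exact (is_RInt_gen_unique _ _ HlP).
  assert (Eu : RInt_gen (fun xi => Rpower (node dt n - xi) (- al) * Derive u xi)
                 (at_point 0) (at_left (node dt n)) = lu) by exact (is_RInt_gen_unique _ _ Hlu).
  unfold Dki, caputo; rewrite EP, Eu, <- Rmult_minus_distr_l, Rabs_mult.
  apply Rmult_le_compat_l; [apply Rabs_pos|].
  apply (is_RInt_gen_abs_le (fun y => hP y - hu y) (node dt n) (node dt (n - 1))); auto.
  - exact (is_RInt_gen_minus _ _ _ _ HlP Hlu).
  - intros b Hb; destruct (truncated_gap b Hb) as [vP [vu [HvP [Hvu Hgap]]]].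
    exists (vP - vu); split; auto.
    exact (is_RInt_minus (V := R_NormedModule) _ _ _ _ _ _ HvP Hvu).
Qed.

Lemma Dki_sub_caputo_rate :
  let C := Rabs (/ Gamma (1 - al)) * (INR k * initial_err_coeff al k K0 + interior_err_coeff al k K1) in
  ((i < k)%nat -> Rabs (Dki al k i u dt n - caputo al u (node dt n))
     <= C * (Rpower (node dt (n - k + i)) (-al - 1) * dt ^ (k + 1) + Rpower dt (INR (k + 1) - al))) /\
  (i = k -> Rabs (Dki al k i u dt n - caputo al u (node dt n)) <= C * Rpower dt (INR (k + 1) - al)).
Proof.
  intros C.
  assert (HA0 : 0 <= initial_err_coeff al k K0).
  { pose proof (interp_err_const_nonneg (k - 1)); pose proof (pos_INR (k - 1)); pose proof K0_nonneg.
    unfold initial_err_coeff; repeat apply Rmult_le_pos; lra. }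
  assert (HB0 : 0 <= interior_err_coeff al k K1).
  { pose proof (interp_err_const_nonneg k); pose proof (pos_INR k); pose proof K1_nonneg.
    assert (0 < / (1 - al)) by (apply Rinv_0_lt_compat; lra).
    unfold interior_err_coeff; repeat apply Rmult_le_pos; lra. }
  pose proof (Rpower_gt_0 (node dt (n - k + i)) (- al - 1)).
  pose proof (Rpower_gt_0 dt (INR (k + 1) - al)).
  assert (0 < dt ^ (k + 1)) by (apply pow_lt; lra).
  split; [intros Hlt | intros Heq]; (eapply Rle_trans; [apply Dki_sub_caputo_abs_le|]);
    unfold C; rewrite (Rmult_assoc (Rabs _)); apply Rmult_le_compat_l; try apply Rabs_pos.
  - rewrite Rmult_assoc; apply weighted_sum_le_mult_sum; try nra.
    split; [apply pos_INR | apply le_INR; lia].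
  - rewrite Heq, Nat.sub_diag; simpl INR.
    assert (0 <= INR k * initial_err_coeff al k K0 * Rpower dt (INR (k + 1) - al))
      by (pose proof (pos_INR k); apply Rmult_le_pos; [apply Rmult_le_pos|]; lra).
    lra.
Qed.

End Consistency.

Theorem theorem2p6 (alpha T : R) (k i : nat) (u : R -> R) :
  0 < alpha < 1 -> 0 < T ->
  (1 <= i)%nat -> (i <= k)%nat -> (k <= 6)%nat ->
  (* u in C^{k+1}[0,T] *)
  (forall x, 0 <= x <= T -> forall m, (m <= k + 1)%nat -> ex_derive_n u m x) ->
  (forall x, 0 <= x <= T -> continuous (Derive_n u (k + 1)) x) ->
  exists C : R, forall M n : nat,
    (1 <= M)%nat -> (k <= n)%nat -> (n <= M)%nat ->
    let dt := T / INR M in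
    ((i < k)%nat ->
      Rabs (Dki alpha k i u dt n - caputo alpha u (node dt n))
        <= C * (Rpower (node dt (n - k + i)) (- alpha - 1) * dt ^ (k + 1)
                + Rpower dt (INR (k + 1) - alpha))) /\
    (i = k ->
      Rabs (Dki alpha k i u dt n - caputo alpha u (node dt n))
        <= C * Rpower dt (INR (k + 1) - alpha)).
Proof.
  intros Hal HT Hi Hik Hk6 Hu Hc.
  replace (k + 1)%nat with (S k) in Hc by lia.
  destruct (continuous_bounded (Derive_n u (S k)) 0 T) as [K1 [_ HK1]]; [lra | exact Hc |].
  destruct (continuous_bounded (Derive_n u k) 0 T) as [K0 [_ HK0]]; [lra | |].
  { intros x Hx; destruct (Hu x Hx (S k) ltac:(lia)) as [l Hl]; eapply is_derive_continuous, Hl. }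
  exists (Rabs (/ Gamma (1 - alpha)) * (INR k * initial_err_coeff alpha k K0 + interior_err_coeff alpha k K1)).
  intros M n HM Hkn HnM dt.
  assert (Hdt : 0 < dt) by (apply Rdiv_lt_0_compat; [| apply lt_0_INR]; lia || lra).
  assert (HnT : node dt n <= T) by (apply node_uniform_le; auto).
  apply (Dki_sub_caputo_rate alpha dt k i n u K0 K1); auto; try lia; intros x Hx; auto with real.
  - apply Hu; lra.
  - apply HK0; lra.
  - apply HK1; lra.
Qed.
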